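(* Let $k\ge 0$ and $n,m>0$ be integers and let $P\in T_{n,k,m}$. Then $$\mathrm{word}(\phi'_{n,k,m}(P))=\mathrm{flip}\circ\mathrm{rev}\circ\mathrm{sw}^-_{1,-m}\circ\mathrm{rev}\circ\mathrm{flip}(\mathrm{word}(P)).$$
   Context: Words over $\{\mathrm{N},\mathrm{E}\}$ are identified with lattice paths from $(0,0)$ (N = unit north step, E = unit east step); $\mathrm{word}(P)$ is the word of a path $P$. $\mathrm{rev}(w_1\cdots w_n)=w_n\cdots w_1$, and $\mathrm{flip}$ interchanges the letters $\mathrm{N}$ and $\mathrm{E}$. For integers $r,s$, the levels of a word $w=w_1\cdots w_n$ are $l_0=0$, $l_i=l_{i-1}+r$ if $w_i=\mathrm{N}$, $l_i=l_{i-1}+s$ if $w_i=\mathrm{E}$ (so $l_i=ry+sx$ where $(x,y)$ is the endpoint of step $i$). The sweep map $\mathrm{sw}^-_{r,s}(w)$ is obtained by: for $k=-1,-2,-3,\ldots$ and then $k=\ldots,3,2,1,0$ (all negative values in decreasing order, then all nonnegative values in decreasing order), scan $w$ from right to left and append each letter $w_i$ ($i\ge1$) with $l_i=k$. $T_{n,k,m}$ is the set of lattice paths from $(0,0)$ to $(k+mn,n)$ with unit north and east steps that never go strictly to the right of the line $x=k+my$. For $P\in T_{n,k,m}$ its area vector is $g(P)=(g_0,\ldots,g_{n-1})$, where $g_i$ is the number of complete unit lattice squares in the strip $\{(x,y):x\ge0,\ i\le y\le i+1\}$ lying to the right of $P$ and to the left of the line $x=k+my$. For each integer $i\ge 0$,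 let $z^{(i)}$ be the subsequence of $g(P)$ consisting of the entries lying in $\{i,i-1,\ldots,i-m\}$, let $M$ be the largest $i$ with $z^{(i)}$ nonempty, and let $\sigma^{(i)}\in\{\mathrm{N},\mathrm{E}\}^*$ be obtained from $z^{(i)}$ by replacing each entry equal to $i$ by $\mathrm{N}$ and every other entry by $\mathrm{E}$. For $k<i\le M$, $\sigma^{(i)}$ begins with $\mathrm{E}$; write $\sigma^{(i)}=\mathrm{E}\tilde\sigma^{(i)}$. Set $\tau^{(i)}=\mathrm{rev}(\sigma^{(i)})$ for $0\le i\le k$, $\tau^{(i)}=\mathrm{E}\,\mathrm{rev}(\tilde\sigma^{(i)})$ for $k<i\le M$, and $\tau^{(i)}$ empty for $i>M$. Define $$\tau=\tau^{(0)}\,\mathrm{E}\tau^{(1)}\,\mathrm{E}\tau^{(2)}\cdots\mathrm{E}\tau^{(k)}\,\tau^{(k+1)}\cdots\tau^{(M)}$$ (exactly $k$ inserted letters $\mathrm{E}$, preceding $\tau^{(1)},\ldots,\tau^{(k)}$), and let $\phi'_{n,k,m}(P)$ be the lattice path with word $\tau$. *)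

From mathcomp Require Import all_boot all_order all_algebra.
Set Implicit Arguments. Unset Strict Implicit. Unset Printing Implicit Defensive.
Import GRing.Theory Num.Theory.

(* Letters N (north step) and E (east step); paths from (0,0) are identified
   with their words. *)
Inductive step := N | E.

Definition isN (c : step) : bool := if c is N then true else false.
Definition isE (c : step) : bool := if c is E then true else false.

Definition flip (w : seq step) : seq step :=
  map (fun c => if c is N then E else N) w.

Fixpoint levels (r s l : int) (w : seq step) : seq int :=
  match w with
  | [::] => [::]
  | c :: w' => let l' := (l + (if c is N then r else s))%R in l' :: levels r s l' w'
  end.

Definition sweep_level (r s : int) (w : seq step) (lv : int) : seq step :=
  rev [seq p.1 | p <- zip w (levels r s 0 w) & p.2 == lv].

(* B bounds |l_i| for all i; levels outside [-B, B] contribute nothing. *)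
Definition sweep_bound (r s : int) (w : seq step) : nat :=
  (size w * (absz r + absz s))%N.

Definition sweep_order (B : nat) : seq int :=
  [seq (- (Posz j.+1))%R | j <- iota 0 B] ++ [seq Posz (B - j) | j <- iota 0 B.+1].

Definition sweep_minus (r s : int) (w : seq step) : seq step :=
  flatten [seq sweep_level r s w lv | lv <- sweep_order (sweep_bound r s w)].

Fixpoint points (x y : nat) (w : seq step) : seq (nat * nat) :=
  match w with
  | [::] => [:: (x, y)]
  | N :: w' => (x, y) :: points x y.+1 w'
  | E :: w' => (x, y) :: points x.+1 y w'
  end.

Definition inT (n k m : nat) (w : seq step) : Prop :=
  count isN w = n /\ count isE w = (k + m * n)%N /\
  all (fun p : nat * nat => (p.1 <= k + m * p.2)%N) (points 0 0 w).

Fixpoint north_xs (x : nat) (w : seq step) : seq nat :=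
  match w with
  | [::] => [::]
  | N :: w' => x :: north_xs x w'
  | E :: w' => north_xs x.+1 w'
  end.

(* g_i = number of unit squares [a,a+1]x[i,i+1] (a >= 0) right of P (whose
   step in this strip is the vertical segment at x = xi) and left of the line
   x = k + m y (i.e. a+1 <= k + m i). *)
Definition area_vector (n k m : nat) (w : seq step) : seq nat :=
  mkseq (fun i => let xi := nth 0 (north_xs 0 w) i in
          count (fun a => (xi <= a) && (a.+1 <= k + m * i)) (iota 0 (k + m * n).+1)) n.

Definition zseq (m : nat) (g : seq nat) (i : nat) : seq nat :=
  [seq v <- g | (v <= i <= v + m)%N].

Definition sigma (m : nat) (g : seq nat) (i : nat) : seq step :=
  [seq (if v == i then N else E) | v <- zseq m g i].

(* M = largest i with z^{(i)} nonempty (every such i is <= max g + m) *)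
Definition Mmax (m : nat) (g : seq nat) : nat :=
  \max_(i < (foldr maxn 0 g + m).+1 | (0 < size (zseq m g i))%N) i.

Definition tau (k m : nat) (g : seq nat) (i : nat) : seq step :=
  if (i <= k)%N then rev (sigma m g i)
  else if (i <= Mmax m g)%N then E :: rev (behead (sigma m g i))
  else [::].

Definition phi' (n k m : nat) (w : seq step) : seq step :=
  let g := area_vector n k m w in
  tau k m g 0
  ++ flatten [seq E :: tau k m g i | i <- iota 1 k]
  ++ flatten [seq tau k m g i | i <- iota k.+1 (Mmax m g - k)].

From mathcomp Require Import all_boot all_order all_algebra.
From mathcomp Require Import zify.
From HB Require Import structures.
Import GRing.Theory Num.Theory Order.TTheory.

Set Implicit Arguments.
Unset Strict Implicit.
Unset Printing Implicit Defensive.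

(* Read P forward and follow the slack k + m y - x of its lattice points: it
   starts at k, ends at 0, stays nonnegative, and moves by +m on N and by -1
   on E.  Reversing and flipping the word turns the levels of sw^-_{1,-m} into
   exactly these slacks, so the right-hand side lists, for L = 0, 1, 2, ...,
   the reversed letters of the steps starting at slack L.  The area vector is
   the sequence of slacks at the north steps, so sigma^(L) records the north
   steps starting at slack L (as N) and those jumping over L (as E).  The slack
   walk can only rise past L by such a jump and only fall past L by an east
   step starting at L, so the two alternate: up to a boundary E at each end,
   governed by the start k and the end 0, sigma^(L) is the sequence of letters
   read at slack L.  This boundary bookkeeping is exactly the inserted E's and
   the dropped leading E in the definition of tau. *)

Lemma isNK : cancel isN (fun b => if b then N else E).
Proof. by case. Qed.

HB.instance Definition _ := Equality.copy step (can_type isNK).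

Lemma flip_rev_flip w : flip (rev (flip w)) = rev w.
Proof. by rewrite /flip map_rev -map_comp map_id_in //; case. Qed.

Lemma flatten_map_nil (A : eqType) (B : Type) (f : A -> seq B) (s : seq A) :
  {in s, forall x, f x = [::]} -> flatten [seq f x | x <- s] = [::].
Proof.
elim: s => //= x s IH f_nil; rewrite f_nil ?mem_head // IH // => y s_y.
by apply: f_nil; rewrite in_cons s_y orbT.
Qed.

Lemma rev_map_iota_sub (T : Type) (f : nat -> T) B :
  rev [seq f (B - j) | j <- iota 0 B.+1] = [seq f j | j <- iota 0 B.+1].
Proof.
elim: B => [|B IH] //.
rewrite {1}(_ : iota 0 B.+2 = 0 :: map (addn 1) (iota 0 B.+1)); last by rewrite -iotaDl.
rewrite map_cons -map_comp rev_cons.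
rewrite (eq_map (g := fun j => f (B - j))) => [|j /=]; last by rewrite subSS.
by rewrite IH -[B.+2]addn1 iotaD map_cat cats1 subn0 add0n.
Qed.

Lemma flatten_map_iota_trunc (T : Type) (f : nat -> seq T) c B :
  (c <= B)%N -> (forall i, (c < i)%N -> f i = [::]) ->
  flatten [seq f i | i <- iota 0 B.+1] = flatten [seq f i | i <- iota 0 c.+1].
Proof.
move=> le_cB f_nil; rewrite -(subnKC le_cB) -addSn iotaD map_cat flatten_cat.
by rewrite [X in _ ++ X]flatten_map_nil ?cats0 // => i; rewrite mem_iota => /andP[/f_nil].
Qed.

Lemma count_iota_interval x T U :
  count (fun a => (x <= a) && (a.+1 <= T)) (iota 0 U) = minn T U - x.
Proof.
elim: U => [|U IH]; first by rewrite /=; lia.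
rewrite -addn1 iotaD count_cat IH /= add0n addn0.
by case: (leqP x U) => ? /=; case: (ltnP U T) => ? /=; lia.
Qed.

Lemma leq_foldr_maxn (g : seq nat) v : v \in g -> (v <= foldr maxn 0 g)%N.
Proof.
elim: g => //= a g IH; rewrite in_cons => /orP[/eqP->|/IH le_v]; first exact: leq_maxl.
by rewrite leq_max le_v orbT.
Qed.

Definition slack_step (m : nat) (c : step) : int :=
  if c is N then Posz m else (-1)%R.

Fixpoint slacks (m : nat) (s : int) (w : seq step) : seq int :=
  if w is c :: w' then s :: slacks m (s + slack_step m c)%R w' else [::].

Fixpoint final_slack (m : nat) (s : int) (w : seq step) : int :=
  if w is c :: w' then final_slack m (s + slack_step m c)%R w' else s.

Fixpoint letters_at (m : nat) (s : int) (w : seq step) (L : int) : seq step :=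
  if w is c :: w' then
    (if s == L then [:: c] else [::]) ++ letters_at m (s + slack_step m c)%R w' L
  else [::].

Fixpoint north_slacks (m : nat) (s : int) (w : seq step) : seq int :=
  if w is c :: w' then
    (if c is N then [:: s] else [::]) ++ north_slacks m (s + slack_step m c)%R w'
  else [::].

Definition sigma_int (m : nat) (L : int) (gl : seq int) : seq step :=
  [seq (if v == L then N else E) | v <- gl & ((v <= L) && (L <= v + Posz m))%R].

Lemma sigma_int_cons m L v gl : sigma_int m L (v :: gl) =
  (if ((v <= L) && (L <= v + Posz m))%R then [:: if v == L then N else E] else [::])
  ++ sigma_int m L gl.
Proof. by rewrite /sigma_int /=; case: ifP. Qed.

(* Upward jumps over L (the E's of sigma) and east steps from L (the E's read
   at L) alternate; the boundary E's account for a walk starting below L and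
   for one ending at or above L. *)
Lemma letters_at_sigma_int m s w L :
  (if (L <= s)%R then [::] else [:: E]) ++ letters_at m s w L ++
  (if (L <= final_slack m s w)%R then [:: E] else [::])
  = sigma_int m L (north_slacks m s w) ++ [:: E].
Proof.
elim: w s => [|c w IH] s /=; first by case: ifP.
case: c => /=; rewrite ?sigma_int_cons -?catA -IH /=.
- by have [?|?|?] := ltgtP s L; case: (lerP L (s + m)) => ? //=; lia.
- by have [?|?|?] := ltgtP s L; case: (lerP L (s - 1)) => ? //=; lia.
Qed.

Lemma final_slackE m s w :
  final_slack m s w = (s + Posz (m * count isN w) - Posz (count isE w))%R.
Proof. by elim: w s => [|c w IH] s /=; [lia | rewrite IH; case: c => /=; lia]. Qed.

Lemma size_slacks m s w : size (slacks m s w) = size w.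
Proof. by elim: w s => //= c w IH s; rewrite IH. Qed.

Lemma slacks_rcons m s w c :
  slacks m s (rcons w c) = rcons (slacks m s w) (final_slack m s w).
Proof. by elim: w s => //= c' w IH s; rewrite IH. Qed.

Lemma final_slack_rcons m s w c :
  final_slack m s (rcons w c) = (final_slack m s w + slack_step m c)%R.
Proof. by elim: w s => //= c' w IH s; rewrite IH. Qed.

Lemma mem_north_slacks m s w v : v \in north_slacks m s w -> v \in slacks m s w.
Proof.
elim: w s => //= c w IH s; case: c => /=; rewrite !in_cons.
- by case/orP=> [->|/IH->]; rewrite ?orbT.
- by move/IH->; rewrite orbT.
Qed.

Lemma slacks_le m s w l : l \in slacks m s w -> (l <= s + Posz (m * size w))%R.
Proof.
elim: w s => //= c w IH s; rewrite in_cons => /orP[/eqP->|/IH]; first by lia.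
by case: c => /=; lia.
Qed.

Lemma letters_at_notin m s w L : L \notin slacks m s w -> letters_at m s w L = [::].
Proof.
elim: w s => //= c w IH s; rewrite in_cons negb_or => /andP[neq_Ls notin_L].
by rewrite eq_sym (negbTE neq_Ls) IH.
Qed.

Lemma letters_at_fall m s w L :
  (L <= s)%R -> (final_slack m s w < L)%R -> letters_at m s w L != [::].
Proof.
elim: w s => [|c w IH] s /=; first by lia.
case: (s =P L) => [-> //|neq_sL] Lle fin_lt /=.
by apply: IH => //; case: c {fin_lt} => /=; lia.
Qed.

Lemma letters_at_neq0 m s w L v : v \in north_slacks m s w ->
  (L <= v + Posz m)%R -> (final_slack m s w < L)%R -> letters_at m s w L != [::].
Proof.
elim: w s => [|c w IH] s //=.
case: (s =P L) => [-> //|_] /=.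
case: c => /=; last exact: IH.
by rewrite in_cons => /orP[/eqP->|]; [exact: letters_at_fall | exact: IH].
Qed.

Lemma slacks_ge0 k m x y w :
  all (fun p : nat * nat => (p.1 <= k + m * p.2)%N) (points x y w) ->
  all (fun l : int => 0 <= l)%R (slacks m (Posz (k + m * y) - Posz x)%R w).
Proof.
elim: w x y => [|c w IH] x y //=.
case: c => /= /andP[/= px below]; (apply/andP; split; first by lia).
- by rewrite (_ : (_ + _)%R = Posz (k + m * y.+1) - Posz x)%R; [exact: IH | lia].
- by rewrite (_ : (_ + _)%R = Posz (k + m * y) - Posz x.+1)%R; [exact: IH | lia].
Qed.

Lemma north_slacksE k m x y w :
  north_slacks m (Posz (k + m * y) - Posz x)%R w =
  mkseq (fun i => Posz (k + m * (y + i)) - Posz (nth 0 (north_xs x w) i))%R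
        (count isN w).
Proof.
elim: w x y => [|c w IH] x y //=.
case: c => /=.
- rewrite add1n /mkseq /= addn0; congr (_ :: _).
  have -> : (Posz (k + m * y) - Posz x + Posz m = Posz (k + m * y.+1) - Posz x)%R by lia.
  rewrite IH (iotaDl 1 0) -map_comp; apply: eq_map => i /=.
  by congr (Posz _ - _)%R; lia.
- have -> : (Posz (k + m * y) - Posz x + -1 = Posz (k + m * y) - Posz x.+1)%R by lia.
  exact: IH.
Qed.

Lemma levels_rev_flip m s w :
  levels 1 (- Posz m) (final_slack m s w) (rev (flip w)) = rev (slacks m s w).
Proof.
elim/last_ind: w => [|w c IH] //=.
rewrite /flip map_rcons !rev_rcons slacks_rcons final_slack_rcons /=.
rewrite rev_rcons -IH; congr (_ :: levels _ _ _ _); case: c => /=; lia.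
Qed.

Lemma filter_zip_flip_slacks m s w L :
  [seq p.1 | p <- zip (flip w) (slacks m s w) & p.2 == L] = flip (letters_at m s w L).
Proof. by elim: w s => //= c w IH s; case: eqP => _ /=; rewrite IH. Qed.

Lemma sweep_level_rev_flip m s w : final_slack m s w = 0%R -> forall L,
  sweep_level 1 (- Posz m) (rev (flip w)) L = flip (letters_at m s w L).
Proof.
move=> fin0 L; rewrite /sweep_level -fin0 levels_rev_flip.
rewrite -rev_zip ?size_map ?size_slacks //.
by rewrite filter_rev map_rev revK filter_zip_flip_slacks.
Qed.

Lemma sweep_minus_rev_flip m s w :
  final_slack m s w = 0%R -> all (fun l : int => 0 <= l)%R (slacks m s w) ->
  flip (rev (sweep_minus 1 (- Posz m) (rev (flip w)))) =
  flatten [seq rev (letters_at m s w (Posz i)) |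
           i <- iota 0 (sweep_bound 1 (- Posz m) (rev (flip w))).+1].
Proof.
move=> fin0 slacks_nneg; set B := sweep_bound _ _ _.
rewrite /sweep_minus -/B /sweep_order map_cat flatten_cat flatten_map_nil; last first.
  move=> _ /mapP[j _ ->]; rewrite (sweep_level_rev_flip fin0) letters_at_notin //.
  by apply/negP => /(allP slacks_nneg); lia.
rewrite (eq_map (sweep_level_rev_flip fin0)) -map_comp rev_flatten.
rewrite /flip map_flatten map_rev -!map_comp.
rewrite (eq_map (g := fun j => rev (letters_at m s w (Posz (B - j))))) => [|j /=].
  by rewrite (rev_map_iota_sub (fun i => rev (letters_at m s w (Posz i)))).
exact: flip_rev_flip.
Qed.

Lemma sigma_cons m v g i : sigma m (v :: g) i =
  (if (v <= i <= v + m)%N then [:: if v == i then N else E] else [::]) ++ sigma m g i.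
Proof. by rewrite /sigma /zseq /=; case: ifP. Qed.

Lemma sigma_map_absz m gl i : all (fun l : int => 0 <= l)%R gl ->
  sigma m (map absz gl) i = sigma_int m (Posz i) gl.
Proof.
elim: gl => [|v gl IH] //= /andP[v_ge0 gl_ge0].
by rewrite sigma_cons sigma_int_cons IH //; case: v v_ge0.
Qed.

Lemma leq_Mmax m g i :
  (0 < i <= Mmax m g)%N -> exists2 v, v \in g & (i <= v + m)%N.
Proof.
case/andP=> i_gt0 le_iM.
have [/existsP[j /andP[zj_ne0 lt_ij]]|] :=
  boolP [exists j : 'I_(foldr maxn 0 g + m).+1, (0 < size (zseq m g j)) && (i.-1 < j)%N].
  rewrite /zseq size_filter -has_count in zj_ne0; case/hasP: zj_ne0 => v g_v /andP[_ le_jv].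
  by exists v => //; lia.
move/existsPn => no_j; suff : (Mmax m g <= i.-1)%N by lia.
by apply/bigmax_leqP => j zj_ne0; move: (no_j j); rewrite zj_ne0 -leqNgt.
Qed.

Lemma zseq_gt_Mmax m g i : (Mmax m g < i)%N -> zseq m g i = [::].
Proof.
move=> lt_Mi; apply/eqP; rewrite -size_eq0; apply: contraTT lt_Mi; rewrite -lt0n => zi_ne0.
rewrite -leqNgt; have [i_small|i_large] := ltnP i (foldr maxn 0 g + m).+1.
  exact: (@leq_bigmax_cond _ (fun j : 'I__ => 0 < size (zseq m g j))%N
           (fun j => nat_of_ord j) (Ordinal i_small) zi_ne0).
move: zi_ne0; rewrite size_filter -has_count => /hasP[v g_v /andP[_ le_iv]].
by have := leq_foldr_maxn g_v; lia.
Qed.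

Section PathInT.

Variables (n k m : nat) (w : seq step).
Hypothesis w_in : inT n k m w.

Local Notation g := (area_vector n k m w).
Local Notation M := (Mmax m g).
Local Notation a i := (letters_at m (Posz k) w (Posz i)).

Lemma final_slack_inT : final_slack m k w = 0%R.
Proof. by case: w_in => cN [cE _]; rewrite final_slackE cN cE; lia. Qed.

Lemma slacks_inT_ge0 : all (fun l : int => 0 <= l)%R (slacks m k w).
Proof.
case: w_in => _ [_ below]; have := slacks_ge0 below.
by rewrite muln0 addn0 subr0.
Qed.

Lemma north_slacks_inT_ge0 : all (fun l : int => 0 <= l)%R (north_slacks m k w).
Proof. by apply/allP => v /mem_north_slacks /(allP slacks_inT_ge0). Qed.

Lemma area_vector_inT : g = map absz (north_slacks m k w).
Proof.
case: w_in => cN _; have := north_slacksE k m 0 0 w.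
rewrite muln0 addn0 subr0 cN => nsE.
rewrite nsE /area_vector /mkseq -map_comp.
apply/eq_in_map => i; rewrite mem_iota add0n => lt_in.
set xi := nth 0 (north_xs 0 w) i.
have : (Posz (k + m * i) - Posz xi)%R \in north_slacks m k w.
  by rewrite nsE; apply: map_f; rewrite mem_iota.
move=> /mem_north_slacks /(allP slacks_inT_ge0) xi_le.
rewrite count_iota_interval (minn_idPl _) /= ?add0n -/xi; first by lia.
by apply: leqW; rewrite leq_add2l leq_mul2l ltnW ?orbT.
Qed.

Lemma letters_at_sigma i :
  (if (i <= k)%N then [::] else [:: E]) ++ a i ++ (if i == 0 then [:: E] else [::])
  = sigma m g i ++ [:: E].
Proof.
rewrite area_vector_inT sigma_map_absz ?north_slacks_inT_ge0 //.
have -> : (i == 0) = (Posz i <= 0)%R by case: i.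
by rewrite -letters_at_sigma_int final_slack_inT lez_nat.
Qed.

Lemma tau_0 : tau k m g 0 = rev (a 0).
Proof.
have := letters_at_sigma 0.
by rewrite /tau leq0n /= !cats1 => /(@rcons_injl _ E) ->.
Qed.

Lemma tau_le_k i : (0 < i <= k)%N -> E :: tau k m g i = rev (a i).
Proof.
case/andP=> i_gt0 le_ik; have := letters_at_sigma i.
by rewrite /tau le_ik (gtn_eqF i_gt0) cats0 cat0s => ->; rewrite rev_cat.
Qed.

Lemma letters_at_neq0_gt_k i : (k < i <= M)%N -> a i != [::].
Proof.
case/andP=> lt_ki le_iM.
have [v] : exists2 v, v \in g & (i <= v + m)%N.
  by apply: leq_Mmax; rewrite le_iM (leq_ltn_trans _ lt_ki).
rewrite area_vector_inT => /mapP[u ns_u ->] le_iu.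
apply: (letters_at_neq0 ns_u); last by rewrite final_slack_inT; lia.
by have := allP north_slacks_inT_ge0 _ ns_u; lia.
Qed.

Lemma tau_gt_k i : (k < i <= M)%N -> tau k m g i = rev (a i).
Proof.
move=> i_in; have ai_neq0 := letters_at_neq0_gt_k i_in; case/andP: i_in => lt_ki le_iM.
have := letters_at_sigma i.
rewrite /tau leqNgt lt_ki le_iM (gtn_eqF (leq_ltn_trans (leq0n k) lt_ki)) cats0 /=.
case: (sigma m g i) => [[ai0]|x sg [_ ->]]; first by rewrite ai0 in ai_neq0.
by rewrite rev_cat.
Qed.

Lemma letters_at_gt_Mmax i : (maxn k M < i)%N -> a i = [::].
Proof.
rewrite gtn_max => /andP[lt_ki lt_Mi]; have := letters_at_sigma i.
rewrite /sigma zseq_gt_Mmax // leqNgt lt_ki.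
by rewrite (gtn_eqF (leq_ltn_trans (leq0n k) lt_ki)) cats0 /=; case.
Qed.

Lemma phi'_letters_at :
  phi' n k m w = flatten [seq rev (a i) | i <- iota 0 (maxn k M).+1].
Proof.
rewrite /phi' (_ : (maxn k M).+1 = 1 + k + (M - k)); last by lia.
rewrite !iotaD !map_cat !flatten_cat /= cats0 tau_0 add0n add1n -!catA.
congr (_ ++ _ ++ _); congr flatten; apply/eq_in_map => i; rewrite mem_iota => i_in.
- by apply: tau_le_k; lia.
- by apply: tau_gt_k; lia.
Qed.

Lemma maxn_le_sweep_bound : (maxn k M <= sweep_bound 1 (- Posz m) (rev (flip w)))%N.
Proof.
have le_k_size : (k <= size w)%N.
  by case: w_in => _ [cE _]; apply: leq_trans (count_size isE w); rewrite cE leq_addr.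
rewrite /sweep_bound size_rev size_map abszN geq_max; apply/andP; split; first by nia.
have [le_Mk|lt_kM] := leqP M k; first by nia.
have M_in : Posz M \in slacks m k w.
  apply: contraT => /letters_at_notin aM0.
  by have := @letters_at_neq0_gt_k M; rewrite lt_kM leqnn aM0 => /(_ isT).
by have := slacks_le M_in; nia.
Qed.

End PathInT.

Theorem mainTheorem2 (n k m : nat) (w : seq step) :
  (0 < n)%N -> (0 < m)%N -> inT n k m w ->
  phi' n k m w = flip (rev (sweep_minus 1 (- Posz m)%R (rev (flip w)))).
Proof.
move=> _ _ w_in.
rewrite (sweep_minus_rev_flip (final_slack_inT w_in) (slacks_inT_ge0 w_in)).
rewrite (phi'_letters_at w_in); symmetry; apply: flatten_map_iota_trunc.
- exact: maxn_le_sweep_bound w_in.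
- by move=> i /(letters_at_gt_Mmax w_in) ->.
Qed.
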